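(* Let $B$ be a soluble skew left brace and let $r_B\colon B\times B\to B\times B$, $r_B(a,b)=(\lambda_a(b),\lambda_a(b)^{-1}ab)$, be its associated solution of the Yang–Baxter equation. Then $(B,r_B)$ is uniformly multidecomposable.
   Context: A skew left brace (brace) is a set $B$ with two group structures $(B,+)$ and $(B,\cdot)$ (product by juxtaposition) such that $a(b+c)=ab-a+ac$; common identity $0$; $\lambda_a(b)=-a+ab$. An ideal of $B$ is a subset that is a normal subgroup of $(B,+)$ and of $(B,\cdot)$ and is invariant under all $\lambda_b$. For ideals $I,J$, $[I,J]$ is the smallest ideal containing $[I,J]_+$, $[I,J]_\cdot$ and all $ij-(i+j)$ ($i\in I,j\in J$). $B$ is abelian if $[B,B]=0$ (i.e. $ab=a+b=b+a$ for all $a,b$). $B$ is soluble if there is a chain $B=I_0\supseteq I_1\supseteq\cdots\supseteq I_n=0$ with each $I_i$ an ideal of the brace $I_{i-1}$ and $I_{i-1}/I_i$ abelian. A solution $(X,r)$ of the YBE is a set $X$ with a bijection $r:X\times X\to X\times X$ satisfying $r_{12}r_{23}r_{12}=r_{23}r_{12}r_{23}$ ($r_{12}=r\times\mathrm{id}$, $r_{23}=\mathrm{id}\times r$), both of whose components are bijective (non-degenerate). A partition $\mathcal P$ of a set is uniform if all its blocks have the same cardinality. For a partition $\mathcal P=\{X_i\}_{i\in I}$ of $X$, $(X,r)$ is (uniformly) $\mathcal P$-decomposable if ($\mathcal P$ is uniform and) $r(X_i\times X_j)=X_j\times X_i$ for all $i,j$. $(X,r)$ is (uniformly) multidecomposable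 if there is a chain $X=X_0\supseteq X_1\supseteq\cdots\supseteq X_n$ with $|X_n|=1$ such that for each $0\le i\le n-1$ there is a (uniform) partition $\mathcal P_i$ of $X_i$ with $X_{i+1}\in\mathcal P_i$ and $(X_i,r|_{X_i\times X_i})$ (uniformly) $\mathcal P_i$-decomposable. *)

(* skew braces may be infinite, so we use an abstract carrier
   type with explicit operations and axioms, and subsets as predicates. *)
Set Implicit Arguments.

Record skew_brace := SkewBrace {
  carrier :> Type;
  add : carrier -> carrier -> carrier;
  opp : carrier -> carrier;
  zero : carrier;
  mul : carrier -> carrier -> carrier;
  inv : carrier -> carrier;
  addA : forall a b c, add a (add b c) = add (add a b) c;
  add0l : forall a, add zero a = a;
  add0r : forall a, add a zero = a;
  addNl : forall a, add (opp a) a = zero;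
  addNr : forall a, add a (opp a) = zero;
  mulA : forall a b c, mul a (mul b c) = mul (mul a b) c;
  mul0l : forall a, mul zero a = a;
  mul0r : forall a, mul a zero = a;
  mulVl : forall a, mul (inv a) a = zero;
  mulVr : forall a, mul a (inv a) = zero;
  brace_law : forall a b c,
    mul a (add b c) = add (mul a b) (add (opp a) (mul a c))
}.

Arguments add {s}. Arguments opp {s}. Arguments zero {s}.
Arguments mul {s}. Arguments inv {s}.

Section BraceDefs.
Variable B : skew_brace.

Definition lambda (a b : B) : B := add (opp a) (mul a b).

Definition ideal_of (J I : B -> Prop) : Prop :=
  (forall x, I x -> J x) /\
  I zero /\
  (forall x y, I x -> I y -> I (add x y)) /\
  (forall x, I x -> I (opp x)) /\
  (forall j x, J j -> I x -> I (add (add j x) (opp j))) /\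
  (forall x y, I x -> I y -> I (mul x y)) /\
  (forall x, I x -> I (inv x)) /\
  (forall j x, J j -> I x -> I (mul (mul j x) (inv j))) /\
  (forall j x, J j -> I x -> I (lambda j x)).

(** The quotient brace J/I is abelian: in J/I (cosets x + I) we have
    ab = a + b = b + a, i.e. for a b in J the elements ab, a+b, b+a
    lie in the same coset of I. *)
Definition quotient_abelian (J I : B -> Prop) : Prop :=
  forall a b, J a -> J b ->
    I (add (opp (add a b)) (add b a)) /\
    I (add (opp (add a b)) (mul a b)).

Definition soluble : Prop :=
  exists (n : nat) (I : nat -> B -> Prop),
    (forall x, I 0 x) /\
    (forall x, I n x <-> x = zero) /\
    (forall i, i < n -> ideal_of (I i) (I (S i)) /\
                        quotient_abelian (I i) (I (S i))).

Definition r_brace (p : B * B) : B * B :=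
  let (a, b) := p in
  (lambda a b, mul (inv (lambda a b)) (mul a b)).

End BraceDefs.

Section Decomp.
Variable X : Type.

Definition bijective_fun (A C : Type) (f : A -> C) : Prop :=
  exists g : C -> A, (forall x, g (f x) = x) /\ (forall y, f (g y) = y).

Definition equipotent (A C : X -> Prop) : Prop :=
  exists f : {x | A x} -> {x | C x}, bijective_fun f.

Definition is_partition (Y : X -> Prop) (Idx : Type) (P : Idx -> X -> Prop) :
  Prop :=
  (forall k, exists x, P k x) /\
  (forall k x, P k x -> Y x) /\
  (forall x, Y x -> exists k, P k x) /\
  (forall k l x, P k x -> P l x -> k = l).

Definition uniform (Idx : Type) (P : Idx -> X -> Prop) : Prop :=
  forall k l, equipotent (P k) (P l).

Definition P_decomposable (r : X * X -> X * X) (Idx : Type)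
  (P : Idx -> X -> Prop) : Prop :=
  forall k l (q : X * X),
    (exists a b, P k a /\ P l b /\ r (a, b) = q) <-> (P l (fst q) /\ P k (snd q)).

Definition uniformly_multidecomposable (r : X * X -> X * X) : Prop :=
  exists (n : nat) (Xs : nat -> X -> Prop),
    (forall x, Xs 0 x) /\
    (forall i, i < n -> forall x, Xs (S i) x -> Xs i x) /\
    (exists x0, forall x, Xs n x <-> x = x0) /\
    (forall i, i < n ->
       exists (Idx : Type) (P : Idx -> X -> Prop),
         is_partition (Xs i) P /\ uniform P /\
         (exists k, forall x, P k x <-> Xs (S i) x) /\
         P_decomposable r P).

End Decomp.

(** Fix a sub-brace [J] of [B] (a subset closed under both group structures),
    an ideal [I] of [J], and assume [J/I] is abelian.  Write [x ≡ y] for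
    [-x + y ∈ I].  Modulo [I] the elements [a + b], [b + a] and [ab] agree, so
    [λ_a(b) ≡ b] and [λ_a(b)⁻¹ab ≡ a]: the map [r_B] sends [aI × bI] into
    [bI × aI].  Conversely [r_B] has the explicit inverse
    [(c,d) ↦ (cd - c, (cd - c)⁻¹cd)], which sends [cI × dI] back into
    [dI × cI].  Hence the cosets of [I] in [J] form a partition of [J], with
    block [I] itself, for which [r_B] is decomposable; it is uniform because
    left translations [x ↦ b - a + x] are bijections between cosets.
    Applying this to each step [I_i ⊇ I_(i+1)] of a soluble series yields the
    chain required by uniform multidecomposability, ending at [I_n = {0}]. *)

From Stdlib Require Import ProofIrrelevance FunctionalExtensionality PropExtensionality.
Set Implicit Arguments.
Unset Strict Implicit.

Arguments lambda {B} a b. Arguments r_brace {B} p.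
Arguments ideal_of {B} J I. Arguments quotient_abelian {B} J I.
Arguments addA {s}. Arguments add0l {s}. Arguments add0r {s}.
Arguments addNl {s}. Arguments addNr {s}. Arguments mulA {s}.
Arguments mul0l {s}. Arguments mulVl {s}. Arguments mulVr {s}.

Declare Scope brace_scope.
Notation "x + y" := (add x y) : brace_scope.
Notation "- x" := (opp x) : brace_scope.
Notation "x * y" := (mul x y) : brace_scope.

Section GroupFacts.
Variable B : skew_brace.
Local Open Scope brace_scope.
Implicit Types x y : B.

Lemma opp_involutive x : - - x = x.
Proof.
  rewrite <- (add0r (- - x)), <- (addNl x), addA, addNl. apply add0l.
Qed.

Lemma add_cancel_l x y : - x + (x + y) = y.
Proof. rewrite addA, addNl. apply add0l. Qed.

Lemma add_cancel_l' x y : x + (- x + y) = y.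
Proof. rewrite addA, addNr. apply add0l. Qed.

Lemma opp_add x y : - (x + y) = - y + - x.
Proof.
  assert (H : (x + y) + (- y + - x) = zero)
    by (rewrite <- addA, add_cancel_l'; apply addNr).
  rewrite <- (add0r (- (x + y))), <- H, addA, addNl. apply add0l.
Qed.

Lemma opp_zero : - (@zero B) = zero.
Proof. rewrite <- (add0r (- zero)). apply addNl. Qed.

Lemma mul_cancel_l x y : inv x * (x * y) = y.
Proof. rewrite mulA, mulVl. apply mul0l. Qed.

Lemma mul_cancel_l' x y : x * (inv x * y) = y.
Proof. rewrite mulA, mulVr. apply mul0l. Qed.

End GroupFacts.

Definition r_brace_inv (B : skew_brace) (q : B * B) : B * B :=
  let (c, d) := q in
  let a := add (mul c d) (opp c) in (a, mul (inv a) (mul c d)).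

Lemma r_brace_inv_spec (B : skew_brace) (q : B * B) :
  r_brace (r_brace_inv q) = q.
Proof.
  destruct q as [c d]. unfold r_brace_inv, r_brace, lambda; cbv zeta.
  rewrite mul_cancel_l', opp_add, opp_involutive, <- addA, addNl, add0r.
  rewrite mul_cancel_l. reflexivity.
Qed.

Definition sub_brace (B : skew_brace) (J : B -> Prop) : Prop :=
  J zero /\ (forall x y, J x -> J y -> J (add x y)) /\ (forall x, J x -> J (opp x)) /\
  (forall x y, J x -> J y -> J (mul x y)) /\ (forall x, J x -> J (inv x)).

Section AbelianStep.
Variable B : skew_brace.
Variables J I : B -> Prop.
Hypothesis J_sub : sub_brace J.
Hypothesis I_ideal : ideal_of J I.
Hypothesis J_mod_I_abelian : quotient_abelian J I.
Local Open Scope brace_scope.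

Lemma J_add x y : J x -> J y -> J (x + y). Proof. apply J_sub. Qed.
Lemma J_opp x : J x -> J (- x). Proof. apply J_sub. Qed.
Lemma J_mul x y : J x -> J y -> J (x * y). Proof. apply J_sub. Qed.
Lemma J_inv x : J x -> J (inv x). Proof. apply J_sub. Qed.
Local Hint Resolve J_add J_opp J_mul J_inv : core.

Definition cong (x y : B) : Prop := I (- x + y).

Lemma cong_refl x : cong x x.
Proof. unfold cong. rewrite addNl. apply I_ideal. Qed.

Lemma cong_trans x y z : cong x y -> cong y z -> cong x z.
Proof.
  unfold cong. intros Hxy Hyz.
  pose proof (proj1 (proj2 (proj2 I_ideal)) _ _ Hxy Hyz) as H.
  rewrite <- addA, add_cancel_l' in H. exact H.
Qed.

Lemma cong_sym x y : cong x y -> cong y x.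
Proof.
  unfold cong. intro Hxy.
  pose proof (proj1 (proj2 (proj2 (proj2 I_ideal))) _ Hxy) as H.
  rewrite opp_add, opp_involutive in H. exact H.
Qed.

Lemma cong_addl z x y : cong x y -> cong (z + x) (z + y).
Proof. unfold cong. rewrite opp_add, <- addA, add_cancel_l. auto. Qed.

Lemma cong_addr z x y : J z -> cong x y -> cong (x + z) (y + z).
Proof.
  unfold cong. intros Jz Hxy.
  pose proof (proj1 (proj2 (proj2 (proj2 (proj2 I_ideal)))) _ _ (J_opp Jz) Hxy) as H.
  rewrite opp_involutive, !addA in H. rewrite opp_add, !addA. exact H.
Qed.

Lemma cong_mul_add_comm a b : J a -> J b -> cong (a * b) (b + a).
Proof.
  intros Ja Jb. destruct (J_mod_I_abelian Ja Jb) as [Hcomm Hmul].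
  exact (cong_trans (cong_sym Hmul) Hcomm).
Qed.

Lemma cong_lambda a b : J a -> J b -> cong b (lambda a b).
Proof.
  intros Ja Jb. destruct (J_mod_I_abelian Ja Jb) as [_ Hmul].
  pose proof (cong_addl (- a) Hmul) as H. rewrite add_cancel_l in H. exact H.
Qed.

(** Second component of [r_B]: [λ_a(b)⁻¹ab ≡ a].  With [u = λ_a(b)] and
    [v = u⁻¹ab] we have [u + v ≡ uv = ab ≡ b + a ≡ u + a]. *)
Lemma cong_r_brace_snd a b : J a -> J b -> cong a (snd (r_brace (a, b))).
Proof.
  intros Ja Jb. simpl.
  set (u := lambda a b). set (v := inv u * (a * b)).
  assert (Ju : J u) by (unfold u, lambda; auto).
  assert (Jv : J v) by (unfold v; auto).
  assert (Huv : cong (u + v) (b + a)).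
  { destruct (J_mod_I_abelian Ju Jv) as [_ Hmul].
    unfold v in Hmul at 2. rewrite mul_cancel_l' in Hmul.
    exact (cong_trans Hmul (cong_mul_add_comm Ja Jb)). }
  assert (Hba : cong (b + a) (u + a)) by exact (cong_addr Ja (cong_lambda Ja Jb)).
  pose proof (cong_addl (- u) (cong_trans Huv Hba)) as H.
  rewrite !add_cancel_l in H. exact (cong_sym H).
Qed.

Lemma cong_r_brace_inv c d : J c -> J d ->
  cong d (fst (r_brace_inv (c, d))) /\ cong c (snd (r_brace_inv (c, d))).
Proof.
  intros Jc Jd. simpl.
  set (a := c * d + - c). set (b := inv a * (c * d)).
  assert (Ja : J a) by (unfold a; auto).
  assert (Jb : J b) by (unfold b; auto).
  split.
  - pose proof (cong_addr (J_opp Jc) (cong_mul_add_comm Jc Jd)) as H.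
    rewrite <- addA, addNr, add0r in H. exact (cong_sym H).
  - pose proof (cong_lambda Ja Jb) as H.
    pose proof (r_brace_inv_spec (c, d)) as Hinv. simpl in Hinv.
    fold a b in Hinv. injection Hinv as Hl _.
    rewrite Hl in H. exact (cong_sym H).
Qed.

Definition coset (a : B) : B -> Prop := fun x => J x /\ cong a x.

Lemma coset_self a : J a -> coset a a.
Proof. split; [assumption | apply cong_refl]. Qed.

Lemma coset_eq a b : cong a b -> coset a = coset b.
Proof.
  intro Hab. apply functional_extensionality. intro x.
  apply propositional_extensionality. unfold coset.
  split; intros [Jx Hx]; split; auto.
  - exact (cong_trans (cong_sym Hab) Hx).
  - exact (cong_trans Hab Hx).
Qed.

Lemma r_brace_cosets a b (q : B * B) :
  (exists a' b', coset a a' /\ coset b b' /\ r_brace (a', b') = q) <->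
  (coset b (fst q) /\ coset a (snd q)).
Proof.
  split.
  - intros [a' [b' [[Ja Ha] [[Jb Hb] <-]]]].
    split; split; simpl; unfold lambda; auto.
    + exact (cong_trans Hb (cong_lambda Ja Jb)).
    + exact (cong_trans Ha (cong_r_brace_snd Ja Jb)).
  - destruct q as [c d]. simpl. intros [[Jc Hc] [Jd Hd]].
    destruct (cong_r_brace_inv Jc Jd) as [Hfst Hsnd].
    pose proof (r_brace_inv_spec (c, d)) as Hinv.
    destruct (r_brace_inv (c, d)) as [a' b'] eqn:Hab. simpl in Hfst, Hsnd.
    assert (Ja' : J a') by (injection Hab as <- _; auto).
    assert (Jb' : J b') by (injection Hab as _ <-; auto).
    exists a', b'. split; [|split].
    + split; [exact Ja' | exact (cong_trans Hd Hfst)].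
    + split; [exact Jb' | exact (cong_trans Hc Hsnd)].
    + exact Hinv.
Qed.

Lemma coset_translate a b x : J a -> J b -> coset a x -> coset b (b + (- a + x)).
Proof.
  intros Ja Jb [Jx Hx]. split; [auto|]. unfold cong. rewrite add_cancel_l. exact Hx.
Qed.

Lemma cosets_equipotent a b : J a -> J b -> equipotent (coset a) (coset b).
Proof.
  intros Ja Jb.
  exists (fun s => exist _ _ (coset_translate Ja Jb (proj2_sig s))).
  exists (fun s => exist _ _ (coset_translate Jb Ja (proj2_sig s))).
  split; intros [x Hx]; apply subset_eq_compat; simpl;
    rewrite add_cancel_l; apply add_cancel_l'.
Qed.

Definition coset_block : Type := {S : B -> Prop | exists a, J a /\ S = coset a}.

Definition block_of (a : B) (Ja : J a) : coset_block :=
  exist _ (coset a) (ex_intro _ a (conj Ja eq_refl)).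

Lemma cosets_partition : is_partition J (fun k : coset_block => proj1_sig k).
Proof.
  split; [|split; [|split]].
  - intros [S [a [Ja ->]]]. exists a. exact (coset_self Ja).
  - intros [S [a [Ja ->]]] x [Jx _]. exact Jx.
  - intros x Jx. exists (block_of Jx). exact (coset_self Jx).
  - intros [S [a [Ja ->]]] [T [b [Jb ->]]] x [_ Hx] [_ Hy].
    apply subset_eq_compat. apply coset_eq.
    exact (cong_trans Hx (cong_sym Hy)).
Qed.

Lemma coset_zero x : coset zero x <-> I x.
Proof.
  unfold coset, cong. rewrite opp_zero, add0l.
  split; [intros [_ Hx]; exact Hx | intro Hx; split; [apply I_ideal |]; exact Hx].
Qed.

Lemma abelian_step_decomposable :
  exists (Idx : Type) (P : Idx -> B -> Prop),
    is_partition J P /\ uniform P /\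
    (exists k, forall x, P k x <-> I x) /\ P_decomposable (@r_brace B) P.
Proof.
  exists coset_block, (fun k => proj1_sig k).
  split; [exact cosets_partition | split; [|split]].
  - intros [S [a [Ja ->]]] [T [b [Jb ->]]]. exact (cosets_equipotent Ja Jb).
  - exists (block_of (proj1 J_sub)). exact coset_zero.
  - intros [S [a [Ja ->]]] [T [b [Jb ->]]] q. exact (r_brace_cosets a b q).
Qed.

End AbelianStep.

Lemma series_sub_brace (B : skew_brace) (I : nat -> B -> Prop) (n : nat) :
  (forall x, I 0 x) ->
  (forall i, i < n -> ideal_of (I i) (I (S i))) ->
  forall i, i <= n -> sub_brace (I i).
Proof.
  intros H0 Hideal [|m] Hm.
  - repeat split; intros; apply H0.
  - destruct (Hideal m Hm) as [_ [Hz [Ha [Ho [_ [Hmul [Hinv _]]]]]]].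
    repeat split; auto.
Qed.

Theorem theoremC (B : skew_brace) :
  soluble B -> uniformly_multidecomposable (@r_brace B).
Proof.
  intros [n [I [H0 [Hn Hstep]]]].
  assert (Hideal : forall i, i < n -> ideal_of (I i) (I (S i)))
    by (intros i Hi; apply Hstep, Hi).
  exists n, I. split; [exact H0 | split; [| split]].
  - intros i Hi x Hx. apply (Hideal i Hi), Hx.
  - exists zero. exact Hn.
  - intros i Hi. apply abelian_step_decomposable.
    + apply (series_sub_brace H0 Hideal). exact (PeanoNat.Nat.lt_le_incl _ _ Hi).
    + apply Hideal, Hi.
    + apply Hstep, Hi.
Qed.
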